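(* For every $n\in\mathbb{N}$, every nonempty chain $c_k$ over $[n]$ with complementary chain $c'_{n-k}$, and all formulas $\varphi,\psi$, the following are derivable in $\mathbf{CPN}_n$: (i) $\vdash_{(n)}\perp_{c_k}\to_{(n)}\neg_{c'_{n-k}}(\varphi\wedge_{(n)}\neg_{c'_{n-k}}\varphi)$; (ii) $\vdash_{(n)}\neg_{c_k}\varphi\wedge_{(n)}\neg_{c_k}\psi\to_{(n)}\neg_{c_k}(\varphi\wedge_{(n)}\psi)$; (iii) $\vdash_{(n)}\neg_{c_k}(\varphi\vee_{(n)}\psi)\to_{(n)}\neg_{c_k}\varphi\vee_{(n)}\neg_{c_k}\psi$; (iv) $\vdash_{(n)}\neg_{c_k}(\varphi\wedge_{(n)}\psi)\to_{(n)}\neg_{c_k}\varphi\vee_{(n)}\neg_{c_k}\psi$; (v) $\vdash_{(n)}\neg_{c_k}\varphi\wedge_{(n)}\neg_{c_k}\psi\to_{(n)}\neg_{c_k}(\varphi\vee_{(n)}\psi)$.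
   Context: Fix $n\in\mathbb{N}$, $n\ge 1$, and write $[n]=\{1,\dots,n\}$. Chains: a chain over $[n]$ is a finite sequence of distinct elements of $[n]$; chains with the same length and the same symbols are identified, so a chain is effectively a subset of $[n]$. $c_k$ denotes a chain with $k$ symbols, $\epsilon$ the empty chain, and $(n)$ the chain consisting of all symbols of $[n]$. For chains $c,d$: the concatenation $c\cdot d$ is the chain of symbols occurring in $c$ or in $d$; the coconcatenation $c\otimes d$ is the chain of symbols occurring in exactly one of $c,d$; $d$ is a subchain of $c$ if every symbol of $d$ is a symbol of $c$. The complementary chain $c'_{n-k}$ of $c_k$ is the chain of the symbols of $[n]$ not occurring in $c_k$. Language of $\mathbf{CPN}_n$: a countable set $P_n$ of propositional letters; constants $\perp_c$ for each chain $c$ over $[n]$ with $1\le |c|\le n-1$, and constants $\perp_{(n)}$ (contradiction) and $\top_{(n)}$ (truth); a unary connective $\neg_c$ for each nonempty chain $c$ over $[n]$ ($\neg_{(n)}$ is the strong negation; the $\neg_c$ with $|c|\le n-1$ are weak negations); a binary connective $\to_{(n)}$. Formulas: propositional letters and constants are formulas; if $\varphi,\psi$ are formulas then so are $\neg_c\varphi$ and $(\varphi\to_{(n)}\psi)$. Conventions: $\neg_\epsilon\varphi:=\varphi$, $\perp_\epsilon:=\top_{(n)}$, and $\perp_c$ for $c=(n)$ means $\perp_{(n)}$. Abbreviations: $\varphi\wedge_{(n)}\psi:=\neg_{(n)}(\varphi\to_{(n)}\neg_{(n)}\psi)$, $\varphi\vee_{(n)}\psi:=\neg_{(n)}\varphi\to_{(n)}\psi$,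 $\varphi\leftrightarrow_{(n)}\psi:=(\varphi\to_{(n)}\psi)\wedge_{(n)}(\psi\to_{(n)}\varphi)$. Axioms of $\mathbf{CPN}_n$, for all formulas $\varphi,\psi,\chi$ and all nonempty chains $c_k,c_r$ over $[n]$: (A1) $\varphi\to_{(n)}(\psi\to_{(n)}\varphi)$; (A2) $(\varphi\to_{(n)}(\psi\to_{(n)}\chi))\to_{(n)}((\varphi\to_{(n)}\psi)\to_{(n)}(\varphi\to_{(n)}\chi))$; (A3) $(\neg_{(n)}\psi\to_{(n)}\neg_{(n)}\varphi)\to_{(n)}((\neg_{(n)}\psi\to_{(n)}\varphi)\to_{(n)}\psi)$; (A4) $\varphi\to_{(n)}(\perp_{c_k}\to_{(n)}\neg_{c_k}\varphi)$; (A5) $\neg_{c_k}\neg_{c_r}\varphi\leftrightarrow_{(n)}\neg_{c_k\otimes c_r}\varphi$; (A6) $\neg_{c_k}\perp_{c_r}\leftrightarrow_{(n)}\perp_{c_k\otimes c_r}$; (A7) $\perp_{c_k}\to_{(n)}\perp_{c_r}$, whenever $c_r$ is a subchain of $c_k$. The only rule of inference is modus ponens (from $\varphi$ and $\varphi\to_{(n)}\psi$ infer $\psi$). For a set $\Sigma$ of formulas, $\Sigma\vdash_{(n)}\varphi$ means there is a finite sequence of formulas ending with $\varphi$, each of which is an axiom, a member of $\Sigma$, or obtained from two earlier members by modus ponens; $\vdash_{(n)}\varphi$ means $\emptyset\vdash_{(n)}\varphi$. *)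

From mathcomp Require Import all_boot.
Set Implicit Arguments. Unset Strict Implicit. Unset Printing Implicit Defensive.

(* Symbols of [n] are represented by 'I_n (i.e. 0..n-1 standing for 1..n).
   A chain over [n] is identified with its set of symbols: {set 'I_n}. *)

Definition cocat (n : nat) (c d : {set 'I_n}) : {set 'I_n} :=
  (c :\: d) :|: (d :\: c).

(* Formulas of CPN_n.
   - Var p : propositional letters (P_n countable, indexed by nat)
   - Bot c : the constant bot_c; Bot set0 is top_(n) (convention bot_eps := top),
             Bot [set: 'I_n] is bot_(n), other c are the constants bot_c with 1<=|c|<=n-1
   - Neg c : the connective neg_c, only for nonempty chains c
   - Imp   : ->_(n) *)
Inductive form (n : nat) : Type :=
| Var : nat -> form n
| Bot : {set 'I_n} -> form n
| Neg : forall c : {set 'I_n}, c != set0 -> form n -> form n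
| Imp : form n -> form n -> form n.

Arguments Var {n} _.
Arguments Bot {n} _.
Arguments Imp {n} _ _.

(* neg_c with the convention neg_eps phi := phi *)
Definition negc (n : nat) (c : {set 'I_n}) (phi : form n) : form n :=
  (if c != set0 as b return (c != set0) = b -> form n
   then fun h => Neg h phi else fun _ => phi) erefl.

Definition fullc (n : nat) : {set 'I_n} := [set: 'I_n].
Definition sneg (n : nat) (phi : form n) : form n := negc (fullc n) phi.
Definition fand (n : nat) (phi psi : form n) : form n := sneg (Imp phi (sneg psi)).
Definition forr (n : nat) (phi psi : form n) : form n := Imp (sneg phi) psi.
Definition fiff (n : nat) (phi psi : form n) : form n := fand (Imp phi psi) (Imp psi phi).

Inductive axiom (n : nat) : form n -> Prop :=
| A1 (phi psi : form n) : axiom (Imp phi (Imp psi phi))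
| A2 (phi psi chi : form n) :
    axiom (Imp (Imp phi (Imp psi chi)) (Imp (Imp phi psi) (Imp phi chi)))
| A3 (phi psi : form n) :
    axiom (Imp (Imp (sneg psi) (sneg phi)) (Imp (Imp (sneg psi) phi) psi))
| A4 (ck : {set 'I_n}) (phi : form n) : ck != set0 ->
    axiom (Imp phi (Imp (Bot ck) (negc ck phi)))
| A5 (ck cr : {set 'I_n}) (phi : form n) : ck != set0 -> cr != set0 ->
    axiom (fiff (negc ck (negc cr phi)) (negc (cocat ck cr) phi))
| A6 (ck cr : {set 'I_n}) : ck != set0 -> cr != set0 ->
    axiom (fiff (negc ck (Bot cr)) (Bot (cocat ck cr)))
| A7 (ck cr : {set 'I_n}) : ck != set0 -> cr != set0 -> cr \subset ck ->
    axiom (Imp (Bot ck) (Bot cr)).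

Inductive deriv (n : nat) (Sigma : form n -> Prop) : form n -> Prop :=
| DAx (phi : form n) : axiom phi -> deriv Sigma phi
| DHyp (phi : form n) : Sigma phi -> deriv Sigma phi
| DMP (phi psi : form n) : deriv Sigma phi -> deriv Sigma (Imp phi psi) -> deriv Sigma psi.

Definition provable (n : nat) (phi : form n) : Prop := deriv (fun _ => False) phi.

(* Split on excluded middle for [bot_c].  Under [bot_c], (A4) and (A5) with
   [c (x) c = eps] make [neg_c] act as the identity.  Under [neg_(n) bot_c],
   (A6) yields [bot_c'] for the complement [c'], and then (A4) and (A5) with
   [c' (x) c = (n)] make [neg_c] act as the strong negation.  In either case
   each item reduces to a classical tautology, derivable from (A1)-(A3). *)
From mathcomp Require Import all_boot.
From Stdlib Require List.
Set Implicit Arguments. Unset Strict Implicit.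

Lemma negc_set0 n (X : form n) : negc set0 X = X.
Proof.
rewrite /negc; move: (erefl (set0 != set0 :> {set 'I_n})).
case: {2 3}(set0 != set0 :> {set 'I_n}) => // set0_neq0.
by have := set0_neq0; rewrite eqxx.
Qed.

Section Calculus.
Variable n : nat.
Implicit Types (A B C X : form n) (G : seq (form n)) (c : {set 'I_n}).
Local Notation N := (@sneg n).

Definition derivable_from G A := deriv (fun x => List.In x G) A.
Local Notation pr := derivable_from.

Ltac in_ctx := first [by left | right; in_ctx].
Ltac hyp := apply: DHyp => /=; in_ctx.

Lemma mp G A B : pr G (Imp A B) -> pr G A -> pr G B.
Proof. by move=> hAB hA; apply: DMP hA hAB. Qed.

Lemma ax G A : axiom A -> pr G A. Proof. exact: DAx. Qed.

Lemma weaken G A B : pr G B -> pr (A :: G) B.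
Proof.
elim=> [x a | x h | x y _ h1 _ h2]; first exact: DAx.
  by apply: DHyp; right.
exact: DMP h1 h2.
Qed.

Lemma imp_refl G A : pr G (Imp A A).
Proof.
apply: mp (mp (ax _ (A2 A (Imp A A) A)) (ax _ (A1 _ _))) _.
exact: ax (A1 _ _).
Qed.

Lemma deduction G A B : pr (A :: G) B -> pr G (Imp A B).
Proof.
elim=> [x a | x h | x y _ h1 _ h2].
- exact: mp (ax _ (A1 _ _)) (ax _ a).
- case: h => [<- | h]; first exact: imp_refl.
  exact: mp (ax _ (A1 _ _)) (DHyp h).
- exact: mp (mp (ax _ (A2 _ _ _)) h2) h1.
Qed.

Lemma imp_const G A B : pr G A -> pr G (Imp B A).
Proof. exact: mp (ax _ (A1 _ _)). Qed.

Lemma ex_falso G A B : pr G (N A) -> pr G A -> pr G B.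
Proof.
move=> hNA hA; apply: mp (mp (ax _ (A3 A B)) (imp_const _ hNA)) _.
exact: imp_const.
Qed.

Lemma reductio G A B : pr (N A :: G) B -> pr (N A :: G) (N B) -> pr G A.
Proof.
by move=> hB hNB; apply: mp (mp (ax _ (A3 B A)) (deduction hNB)) (deduction hB).
Qed.

Lemma sneg_elim G A : pr G (N (N A)) -> pr G A.
Proof. by move=> h; apply: (@reductio _ _ (N A)); [hyp | apply: weaken]. Qed.

Lemma sneg_intro G A : pr G A -> pr G (N (N A)).
Proof. by move=> h; apply: (@reductio _ _ A); [apply: weaken | apply: sneg_elim; hyp]. Qed.

Lemma cases G A C : pr (A :: G) C -> pr (N A :: G) C -> pr G C.
Proof.
move=> hA hNA; apply: (@reductio _ _ C); last hyp.
have hNA' : pr (N C :: G) (N A).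
  apply: (@reductio _ _ C); last hyp.
  by apply: mp (weaken _ (weaken _ (deduction hA))) _; apply: sneg_elim; hyp.
exact: mp (weaken _ (deduction hNA)) hNA'.
Qed.

Lemma and_intro G A B : pr G A -> pr G B -> pr G (fand A B).
Proof.
move=> hA hB; apply: (@reductio _ _ B); first exact: weaken.
by apply: mp _ (weaken _ hA); apply: sneg_elim; hyp.
Qed.

Lemma and_eliml G A B : pr G (fand A B) -> pr G A.
Proof.
move=> h; apply: (@reductio _ _ (Imp A (N B))); last exact: weaken.
by apply: deduction; apply: ex_falso; hyp.
Qed.

Lemma and_elimr G A B : pr G (fand A B) -> pr G B.
Proof.
move=> h; apply: (@reductio _ _ (Imp A (N B))); last exact: weaken.
by apply: imp_const; hyp.
Qed.

Lemma or_introl G A B : pr G A -> pr G (forr A B).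
Proof. by move=> h; apply: deduction; apply: ex_falso; [hyp | apply: weaken]. Qed.

Lemma or_intror G A B : pr G B -> pr G (forr A B).
Proof. exact: imp_const. Qed.

Lemma or_elim G A B C : pr G (forr A B) -> pr (A :: G) C -> pr (B :: G) C -> pr G C.
Proof.
move=> h hA hB; apply: (cases hA).
by apply: mp (weaken _ (deduction hB)) _; apply: mp (weaken _ h) _; hyp.
Qed.

Lemma iff_impl G A B : pr G (fiff A B) -> pr G (Imp A B). Proof. exact: and_eliml. Qed.
Lemma iff_impr G A B : pr G (fiff A B) -> pr G (Imp B A). Proof. exact: and_elimr. Qed.

Lemma cocatss c : cocat c c = set0.
Proof. by apply/setP=> x; rewrite !inE; case: (x \in c). Qed.
Lemma cocatTs c : cocat (fullc n) c = ~: c.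
Proof. by apply/setP=> x; rewrite !inE; case: (x \in c). Qed.
Lemma cocatCs c : cocat (~: c) c = fullc n.
Proof. by apply/setP=> x; rewrite !inE; case: (x \in c). Qed.
Lemma cocatCT c : cocat (~: c) (fullc n) = c.
Proof. by apply/setP=> x; rewrite !inE; case: (x \in c). Qed.

Lemma setC_neq0 c : c != fullc n -> ~: c != set0.
Proof. by apply: contra => /eqP c'0; rewrite -(setCK c) c'0 setC0. Qed.

Section PositiveArity.
Hypothesis n_gt0 : (0 < n)%N.

Lemma fullc_neq0 : fullc n != set0.
Proof. by apply/set0Pn; exists (Ordinal n_gt0); rewrite inE. Qed.

Lemma bot_setC G c : c != set0 -> pr G (N (Bot c)) -> pr G (Bot (~: c)).
Proof.
move=> c0 h; have := iff_impl (ax G (A6 fullc_neq0 c0)).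
by rewrite cocatTs => hA6; apply: mp hA6 h.
Qed.

Lemma sneg_bot_setC G c : c != fullc n -> pr G (Bot c) -> pr G (N (Bot (~: c))).
Proof.
move=> cT h; have := iff_impr (ax G (A6 fullc_neq0 (setC_neq0 cT))).
by rewrite cocatTs setCK => hA6; apply: mp hA6 h.
Qed.

Lemma sneg_bot_full G : pr G (N (Bot (fullc n))).
Proof.
apply: (@cases _ (Bot (fullc n))); last by hyp.
by apply: mp (mp (ax _ (A4 (Bot (fullc n)) fullc_neq0)) _) _; hyp.
Qed.

Lemma negc_of_bot G c X : c != set0 -> pr G (Bot c) -> pr G X -> pr G (negc c X).
Proof. by move=> c0 hc hX; apply: mp (mp (ax _ (A4 X c0)) hX) hc. Qed.

Lemma of_negc_bot G c X : c != set0 -> pr G (Bot c) -> pr G (negc c X) -> pr G X.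
Proof.
move=> c0 hc hX; have := negc_of_bot c0 hc hX.
by have := iff_impl (ax G (A5 X c0 c0)); rewrite cocatss negc_set0; apply: mp.
Qed.

Lemma sneg_of_negc_nbot G c X :
  c != set0 -> pr G (N (Bot c)) -> pr G (negc c X) -> pr G (N X).
Proof.
move=> c0 hc hX; have [cT | cT] := eqVneq c (fullc n); first by rewrite cT in hX.
have := negc_of_bot (setC_neq0 cT) (bot_setC c0 hc) hX.
by have := iff_impl (ax G (A5 X (setC_neq0 cT) c0)); rewrite cocatCs; apply: mp.
Qed.

Lemma negc_of_sneg_nbot G c X :
  c != set0 -> pr G (N (Bot c)) -> pr G (N X) -> pr G (negc c X).
Proof.
move=> c0 hc hX; have [-> // | cT] := eqVneq c (fullc n).
have := negc_of_bot (setC_neq0 cT) (bot_setC c0 hc) hX.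
by have := iff_impl (ax G (A5 X (setC_neq0 cT) fullc_neq0)); rewrite cocatCT; apply: mp.
Qed.

Variables (c : {set 'I_n}) (phi psi : form n).
Hypothesis c0 : c != set0.

Lemma bot_negC_noncontradiction :
  pr [::] (Imp (Bot c) (negc (~: c) (fand phi (negc (~: c) phi)))).
Proof.
have [-> | cT] := eqVneq c (fullc n).
  rewrite /fullc setCT !negc_set0; apply: deduction; apply: ex_falso; last hyp.
  exact: sneg_bot_full.
apply: deduction; have hc' := sneg_bot_setC cT (G := [:: Bot c]) ltac:(hyp).
apply: (negc_of_sneg_nbot (setC_neq0 cT) hc').
apply: (@reductio _ _ phi); first by apply: and_eliml (sneg_elim _); hyp.
apply: (sneg_of_negc_nbot (setC_neq0 cT) (weaken _ hc')).
by apply: and_elimr (sneg_elim _); hyp.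
Qed.

Lemma negc_and_negc :
  pr [::] (Imp (fand (negc c phi) (negc c psi)) (negc c (fand phi psi))).
Proof.
apply: deduction; apply: (@cases _ (Bot c)).
  apply: (negc_of_bot c0); first hyp.
  apply: and_intro; apply: (of_negc_bot c0); try hyp.
    by apply: and_eliml; hyp.
  by apply: and_elimr; hyp.
apply: (negc_of_sneg_nbot c0); first hyp.
apply: sneg_intro; apply: imp_const; apply: (sneg_of_negc_nbot c0); first hyp.
by apply: and_elimr; hyp.
Qed.

Lemma negc_or_negc :
  pr [::] (Imp (negc c (forr phi psi)) (forr (negc c phi) (negc c psi))).
Proof.
apply: deduction; apply: (@cases _ (Bot c)).
  have hor : pr [:: Bot c; negc c (forr phi psi)] (forr phi psi).
    by apply: (of_negc_bot c0); hyp.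
  apply: or_elim hor _ _.
    by apply: or_introl; apply: (negc_of_bot c0); hyp.
  by apply: or_intror; apply: (negc_of_bot c0); hyp.
have hNor : pr [:: N (Bot c); negc c (forr phi psi)] (N (forr phi psi)).
  by apply: (sneg_of_negc_nbot c0); hyp.
apply: deduction; apply: (negc_of_sneg_nbot c0); first hyp.
apply: (@reductio _ _ (forr phi psi)); last by do 2 apply: weaken.
by apply: imp_const; apply: sneg_elim; hyp.
Qed.

Lemma negc_and_or_negc :
  pr [::] (Imp (negc c (fand phi psi)) (forr (negc c phi) (negc c psi))).
Proof.
apply: deduction; apply: (@cases _ (Bot c)).
  have hand : pr [:: Bot c; negc c (fand phi psi)] (fand phi psi).
    by apply: (of_negc_bot c0); hyp.
  apply: deduction; apply: (negc_of_bot c0); first hyp.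
  exact: and_elimr (weaken _ hand).
have hNand : pr [:: N (Bot c); negc c (fand phi psi)] (N (fand phi psi)).
  by apply: (sneg_of_negc_nbot c0); hyp.
apply: deduction; apply: (negc_of_sneg_nbot c0); first hyp.
have hphi : pr [:: N (negc c phi); N (Bot c); negc c (fand phi psi)] phi.
  apply: (@reductio _ _ (negc c phi)); last hyp.
  by apply: (negc_of_sneg_nbot c0); hyp.
by apply: mp _ hphi; apply: sneg_elim; apply: weaken.
Qed.

Lemma negc_and_negc_or :
  pr [::] (Imp (fand (negc c phi) (negc c psi)) (negc c (forr phi psi))).
Proof.
apply: deduction; apply: (@cases _ (Bot c)).
  apply: (negc_of_bot c0); first hyp.
  apply: or_introl; apply: (of_negc_bot c0); first hyp.
  by apply: and_eliml; hyp.
apply: (negc_of_sneg_nbot c0); first hyp.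
apply: (@reductio _ _ psi).
  apply: mp (sneg_elim _) _; first hyp.
  by apply: (sneg_of_negc_nbot c0); first hyp; apply: and_eliml; hyp.
by apply: (sneg_of_negc_nbot c0); first hyp; apply: and_elimr; hyp.
Qed.

End PositiveArity.
End Calculus.

Theorem mainTheorem6 (n : nat) (ck : {set 'I_n}) (phi psi : form n) :
  (0 < n)%N -> ck != set0 ->
  let ck' := ~: ck in
  [/\ provable (Imp (Bot ck) (negc ck' (fand phi (negc ck' phi)))),
      provable (Imp (fand (negc ck phi) (negc ck psi)) (negc ck (fand phi psi))),
      provable (Imp (negc ck (forr phi psi)) (forr (negc ck phi) (negc ck psi))),
      provable (Imp (negc ck (fand phi psi)) (forr (negc ck phi) (negc ck psi))) &
      provable (Imp (fand (negc ck phi) (negc ck psi)) (negc ck (forr phi psi)))].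
Proof.
move=> n_gt0 ck0 ck'; split.
- exact: bot_negC_noncontradiction.
- exact: negc_and_negc.
- exact: negc_or_negc.
- exact: negc_and_or_negc.
- exact: negc_and_negc_or.
Qed.
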